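(* Assume Condition AGCT (see context) holds and that the event $\mathrm{Good}_m$ occurs. Then for every $x\in A^{-1}_{-\infty}$, $$\big\|d(\hat p_n(\cdot\mid T(x)),p(\cdot\mid x))\big\|_{L,k}\le c_{T(x)}+\|\mathrm{conf}(T(x))\|_{L,r}.$$
   Context: Notation. $A$ is a finite alphabet. For $k\ge0$, $A^{-1}_{-k}$ is the set of strings $w=w_{-k}\cdots w_{-1}$ of length $k$ (for $k=0$ the empty string $e$); $A^{-1}_{-\infty}$ is the set of left-infinite sequences $x=\cdots x_{-2}x_{-1}$; $A^*=A^{-1}_{-\infty}\cup\bigcup_{k\ge0}A^{-1}_{-k}$. $|w|$ is the length and $w^{-1}_{-k}=w_{-k}\cdots w_{-1}$ the suffix of length $k$. $w\preceq w'$ ($w'\succeq w$) means $w$ is a suffix of $w'$. For nonempty $w$, $\mathrm{par}(w)=w_{-|w|+1}\cdots w_{-1}$. A tree is a set $\widetilde T\subseteq A^*$ containing $e$ and the parent of each of its nonempty elements; a leaf is an element that is the parent of no element; $\widetilde T$ is complete if every non-leaf node has exactly $|A|$ children. For a tree $\widetilde T$ and $x\in A^{-1}_{-\infty}$, $K_{\widetilde T}(x)=\sup\{k:x^{-1}_{-k}\in\widetilde T\}$ and $\widetilde T(x)=x^{-1}_{-K_{\widetilde T}(x)}$. $\Delta^A$ is the set of probability distributions on $A$. For $v\in\mathbb R^L$, $\|v\|_{L,q}=(\frac1L\sum_\ell|v_\ell|^q)^{1/q}$ ($1\le q<\infty$), $\|v\|_{L,\infty}=\max_\ell|v_\ell|$.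 Model. For $\ell=1,\dots,L$, $X(\ell)$ is a stationary ergodic $A$-valued process with transition probabilities $p_\ell(a\mid x)=\Pr(X_0(\ell)=a\mid X^{-1}_{-\infty}(\ell)=x)$; $p(\cdot\mid x)=(p_\ell(\cdot\mid x))_\ell$, and for $z\in(A^{-1}_{-\infty})^L$, $p(\cdot\mid z)=(p_\ell(\cdot\mid z(\ell)))_\ell$. One observes $X_1^n(\ell)$ for each $\ell$. $N_{j,\ell}(w)$ is the number of occurrences of the finite string $w$ as a consecutive block in $X_1^j(\ell)$ (0 for infinite $w$). If $\min_\ell N_{n-1,\ell}(w)>0$: $\hat p_{n,\ell}(a\mid w)=N_{n,\ell}(wa)/N_{n-1,\ell}(w)$ and $\bar p_{n,\ell}(a\mid w)=\frac{1}{N_{n-1,\ell}(w)}\sum_{i=|w|+1}^{n}\mathbf 1\{X^{i-1}_{i-|w|}(\ell)=w\}p_\ell(a\mid X^{i-1}_{-\infty}(\ell))$; otherwise both equal $1/|A|$. Metrics $d_\ell:\Delta^A\times\Delta^A\to[0,1]$; $d(q,q')=(d_\ell(q_\ell,q'_\ell))_{\ell}$ for families of distributions; $\hat p_n(\cdot|w)=(\hat p_{n,\ell}(\cdot|w))_\ell$, similarly $\bar p_n$. Confidence radii $\mathrm{conf}(w)=(\mathrm{conf}_\ell(w))_{\ell=1}^L$, $w\in A^*$. Approximation error: $c_w=\sup\{\|d(p(\cdot\mid z),\bar p_n(\cdot\mid w))\|_{L,k}:z\in(A^{-1}_{-\infty})^L,\ z(\ell)\succeq w\ \forall\ell\}$.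 The oracle tree $T$ is a minimizer over finite complete trees $\widetilde T$ of $\sup_{x\in A^{-1}_{-\infty}}\big(c_{\widetilde T(x)}+\|\mathrm{conf}(\widetilde T(x))\|_{L,r}\big)$. Event $\mathrm{Good}_m$: for all $w\in A^*$ with $\min_\ell N_{n-1,\ell}(w)>0$, $\|(d_\ell(\bar p_{n,\ell}(\cdot|w),\hat p_{n,\ell}(\cdot|w))/\mathrm{conf}_\ell(w))_\ell\|_{L,m}\le1$. Condition AGCT: the setting holds with $0\le\mathrm{conf}_\ell(w)\le1$, $\mathrm{conf}_\ell(w)\le\mathrm{conf}_\ell(w')$ whenever $w\preceq w'$, and positive extended integers $k,r,m$ with either ($k\le m$, $r\ge km/(m-k)$) or $k\le r=m=\infty$. *)

From mathcomp Require Import all_boot all_order all_algebra.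
From mathcomp Require Import all_classical all_reals all_analysis.
Set Implicit Arguments. Unset Strict Implicit. Unset Printing Implicit Defensive.
Import Order.TTheory GRing.Theory Num.Theory.
Local Open Scope ring_scope.
Local Open Scope classical_set_scope.

Inductive ext := EFin of nat | EInf.

Definition ext_pos (q : ext) : bool :=
  match q with EFin q => (0 < q)%N | EInf => true end.

Definition ext_le (a b : ext) : bool :=
  match a, b with
  | EFin a, EFin b => (a <= b)%N
  | _, EInf => true
  | EInf, EFin _ => false
  end.

(* "r >= k m / (m - k)" (used only when k <= m), with the conventions
   km/0 = oo (k = m finite), km/(m-k) = k when m = oo and k finite,
   and oo when k = m = oo. *)
Definition ext_ge_ratio (r k m : ext) : bool :=
  match k, m, r with
  | EFin _, EFin _, EInf => true
  | EFin k, EFin m, EFin r => (k * m <= r * (m - k))%N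
  | EFin _, EInf, EInf => true
  | EFin k, EInf, EFin r => (k <= r)%N
  | EInf, _, EInf => true
  | EInf, _, EFin _ => false
  end.

Definition AGCT_exponents (k r m : ext) : Prop :=
  [/\ ext_pos k, ext_pos r & ext_pos m] /\
  ((ext_le k m /\ ext_ge_ratio r k m) \/ (ext_le k r /\ r = EInf /\ m = EInf)).

Definition lnorm (R : realType) (L : nat) (q : ext) (v : 'I_L -> R) : R :=
  match q with
  | EFin q => powR ((L%:R)^-1 * \sum_(l < L) `|v l| ^+ q) (q%:R^-1)
  | EInf => \big[Num.max/0]_(l < L) `|v l|
  end.

(* A finite string w = w_{-k} ... w_{-1} is represented by the
   reversed list [:: w_{-1}; w_{-2}; ...; w_{-k}];  a left-infinite sequence
   x = ... x_{-2} x_{-1} by the function t |-> x_{-(t+1)}.  Thus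
   x^{-1}_{-k} = mkseq x k, w is a suffix of w' iff prefix w w', the string
   "w a" is a :: w, and par(w) drops the last list element. *)
Definition par (A : Type) (w : seq A) : seq A := take (size w).-1 w.

(* the block X_{i-len+1} ... X_i of a path X : int -> A (reversed repr.) *)
Definition block (A : Type) (X : int -> A) (i : int) (len : nat) : seq A :=
  mkseq (fun t => X (i - t%:Z)) len.

Definition past (A : Type) (X : int -> A) (i : int) : nat -> A :=
  fun t => X (i - 1 - t%:Z).

Section Model.
Variables (R : realType) (A : finType) (L : nat).

Definition is_dist (q : A -> R) : Prop :=
  (forall a, 0 <= q a) /\ \sum_(a : A) q a = 1.

Definition is_metric01 (dl : (A -> R) -> (A -> R) -> R) : Prop :=
  forall q q' q'', is_dist q -> is_dist q' -> is_dist q'' ->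
  [/\ 0 <= dl q q' <= 1, dl q q' = 0 <-> (forall a, q a = q' a),
      dl q q' = dl q' q & dl q q'' <= dl q q' + dl q' q''].

(* N_j(w) for the path X (observations X_1 ... X_j):
   number of i with |w| <= i <= j and X_{i-|w|+1}^i = w  (N_j(e) = j+1). *)
Definition Ncount (X : int -> A) (j : nat) (w : seq A) : nat :=
  (\sum_(size w <= i < j.+1) nat_of_bool (block X i%:Z (size w) == w))%N.

Variables (X : 'I_L -> int -> A) (p : 'I_L -> (nat -> A) -> A -> R) (n : nat).

Definition enough (w : seq A) : bool :=
  [forall l : 'I_L, (0 < Ncount (X l) n.-1 w)%N].

Definition phat (l : 'I_L) (w : seq A) : A -> R := fun a =>
  if enough w then (Ncount (X l) n (a :: w))%:R / (Ncount (X l) n.-1 w)%:R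
  else #|A|%:R^-1.

Definition pbar (l : 'I_L) (w : seq A) : A -> R := fun a =>
  if enough w then
    (Ncount (X l) n.-1 w)%:R^-1 *
    \sum_((size w).+1 <= i < n.+1)
       ((block (X l) (i%:Z - 1) (size w) == w)%:R * p l (past (X l) i%:Z) a)
  else #|A|%:R^-1.

Variables (d : 'I_L -> (A -> R) -> (A -> R) -> R) (conf : 'I_L -> seq A -> R).

Definition cw (k : ext) (w : seq A) : R :=
  sup [set lnorm k (fun l => d l (p l (z l)) (pbar l w))
      | z in [set z : 'I_L -> nat -> A | forall l, mkseq (z l) (size w) = w]].

Definition is_tree (T : seq (seq A)) : Prop :=
  [::] \in T /\ (forall w, w \in T -> w != [::] -> par w \in T).

Definition children (T : seq (seq A)) (w : seq A) : seq (seq A) :=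
  undup [seq w' <- T | (w' != [::]) && (par w' == w)].

Definition is_leaf (T : seq (seq A)) (w : seq A) : Prop := children T w = [::].

Definition complete (T : seq (seq A)) : Prop :=
  forall w, w \in T -> ~ is_leaf T w -> size (children T w) = #|A|.

Definition KT (T : seq (seq A)) (x : nat -> A) : nat :=
  (\max_(k < (\max_(w <- T) size w).+1 | mkseq x k \in T) k)%N.

Definition Tx (T : seq (seq A)) (x : nat -> A) : seq A := mkseq x (KT T x).

Definition oracle_objective (k r : ext) (T : seq (seq A)) : R :=
  sup [set cw k (Tx T x) + lnorm r (fun l => conf l (Tx T x))
      | x in [set: nat -> A]].

Definition is_oracle_tree (k r : ext) (T : seq (seq A)) : Prop :=
  [/\ is_tree T, complete T &
      forall T', is_tree T' -> complete T' ->
        oracle_objective k r T <= oracle_objective k r T'].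

(* event Good_m; the ratio d/conf with conf = 0 is read as 0 if d = 0 and
   +oo otherwise (hence the first conjunct). *)
Definition Good (m : ext) : Prop :=
  forall w : seq A, enough w ->
    (forall l, conf l w = 0 -> d l (pbar l w) (phat l w) = 0) /\
    lnorm m (fun l => d l (pbar l w) (phat l w) / conf l w) <= 1.

Definition AGCT (k r m : ext) : Prop :=
  [/\ (forall l w, 0 <= conf l w <= 1),
      (forall l w w', prefix w w' -> conf l w <= conf l w') &
      AGCT_exponents k r m].

End Model.

From Pilot Require Import Defs.
From mathcomp Require Import all_boot all_order all_algebra.
From mathcomp Require Import all_classical all_reals all_analysis.
From mathcomp Require Import ring lra zify.
Import Order.TTheory GRing.Theory Num.Theory.
Local Open Scope ring_scope.
Set Implicit Arguments. Unset Strict Implicit.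

(* The metric triangle inequality at each l, followed by Minkowski's inequality
   for the normalized norms, splits the error at T(x) into
   ||d(p(.|x), pbar_n(.|T(x)))||_k, one of the values whose supremum is c_{T(x)},
   and ||d(pbar_n(.|T(x)), phat_n(.|T(x)))||_k.  On Good_m the latter vector is
   b * conf(T(x)) with ||b||_m <= 1, so a Hoelder inequality for normalized norms
   bounds it by ||conf(T(x))||_r.  The exponents only satisfy
   k/m + k/r <= 1, not equality; since the norms are averages, the missing
   weight 1 - k/m - k/r is put on the constant 1 in a pointwise weighted AM-GM
   inequality. *)

Section PowRInequalities.
Variable R : realType.
Implicit Types x y a b t : R.

Lemma powR_le_affine x t : 0 <= x -> 0 <= t <= 1 -> x `^ t <= t * x + (1 - t).
Proof.
move=> x0 /andP[t0 t1].
have [->|tn0] := eqVneq t 0; first by rewrite powRr0 mul0r add0r subr0.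
have [->|tn1] := eqVneq t 1; first by rewrite powRr1 // mul1r subrr addr0.
have tV0 : 0 < t^-1 by rewrite invr_gt0 lt_neqAle eq_sym tn0.
have t'V0 : 0 < (1 - t)^-1 by rewrite invr_gt0 subr_gt0 lt_neqAle tn1.
have conj_t : t^-1^-1 + (1 - t)^-1^-1 = 1 by rewrite !invrK addrC subrK.
have := conjugate_powR (powR_ge0 x t) ler01 tV0 t'V0 conj_t.
by rewrite -powRrM mulfV // powRr1 // powR1 !invrK mulr1 mul1r mulrC.
Qed.

Lemma powR_mul_le_affine x y a b : 0 <= x -> 0 <= y -> 0 <= a -> 0 <= b ->
  a + b <= 1 -> x `^ a * y `^ b <= a * x + b * y + (1 - a - b).
Proof.
move=> x0 y0 a0 b0 ab1.
have [a_eq0|an0] := eqVneq a 0.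
  move: ab1; rewrite a_eq0 powRr0 mul1r mul0r !add0r subr0 => b1.
  by apply: powR_le_affine; rewrite // b0.
have ap : 0 < a by rewrite lt_neqAle eq_sym an0.
have [a1|a1] := eqVneq a 1.
  have b_eq0 : b = 0.
    by apply/le_anti; rewrite b0 andbT; move: ab1; rewrite a1 gerDl.
  by rewrite a1 b_eq0 powRr1 // powRr0 mulr1 mul1r mul0r subrr subr0 !addr0.
have s0 : 0 < 1 - a by move: a1; rewrite neq_lt => /orP[|]; lra.
have bs : 0 <= b / (1 - a) <= 1.
  by rewrite divr_ge0 ?(ltW s0) //= ler_pdivrMr // mul1r lerBrDr addrC.
have aV0 : 0 < a^-1 by rewrite invr_gt0.
have sV0 : 0 < (1 - a)^-1 by rewrite invr_gt0.
have conj_a : a^-1^-1 + (1 - a)^-1^-1 = 1 by rewrite !invrK addrC subrK.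
apply: le_trans (conjugate_powR (powR_ge0 _ _) (powR_ge0 _ _) aV0 sV0 conj_a) _.
rewrite -!powRrM mulfV ?gt_eqF // powRr1 // !invrK (mulrC x) -addrA lerD2l.
apply: le_trans (ler_wpM2r (ltW s0) (powR_le_affine y0 bs)) _.
rewrite (_ : _ * (1 - a) = b * y + (1 - a - b)) //.
by field; rewrite gt_eqF.
Qed.

Lemma convex_exprn (k : nat) t a b : (0 < k)%N -> 0 <= t <= 1 -> 0 <= a -> 0 <= b ->
  (t * a + (1 - t) * b) ^+ k <= t * a ^+ k + (1 - t) * b ^+ k.
Proof.
move=> k0 /andP[t0 t1] a0 b0.
have k1 : (1 : R) <= k%:R by rewrite ler1n.
have Da : a \in (`[0, +oo[%classic : set R) by rewrite inE /= in_itv /= andbT.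
have Db : b \in (`[0, +oo[%classic : set R) by rewrite inE /= in_itv /= andbT.
have := @convex_powR R _ k1 (Itv01 t0 t1) a b Da Db.
by rewrite !convRE /= !powR_mulrn // addr_ge0 // mulr_ge0 // subr_ge0.
Qed.

End PowRInequalities.

Section NormalizedNorms.
Variables (R : realType) (L : nat).
Implicit Types (f g u v b c : 'I_L -> R) (N s t : R).

Definition mean f : R := L%:R^-1 * \sum_(l < L) f l.

Lemma ler_mean f g : (forall l, f l <= g l) -> mean f <= mean g.
Proof. by move=> fg; rewrite ler_wpM2l ?invr_ge0 ?ler0n // ler_sum. Qed.

Lemma meanD f g : mean (fun l => f l + g l) = mean f + mean g.
Proof. by rewrite /mean big_split mulrDr. Qed.

Lemma meanZ s f : mean (fun l => s * f l) = s * mean f.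
Proof. by rewrite /mean -mulr_sumr mulrCA. Qed.

(* Only an inequality: for [L = 0] every mean is [0]. *)
Lemma mean_cst_le s : 0 <= s -> mean (fun=> s) <= s.
Proof.
move=> s0; rewrite /mean sumr_const card_ord -[s *+ L]mulr_natl mulrA.
have [->|L0] := eqVneq L 0%N; first by rewrite invr0 !mul0r.
by rewrite mulVf ?pnatr_eq0 // mul1r.
Qed.

Lemma mean_ge0 f : (forall l, 0 <= f l) -> 0 <= mean f.
Proof. by move=> f0; rewrite mulr_ge0 ?invr_ge0 ?ler0n ?sumr_ge0. Qed.

Lemma lnorm_ge0 q v : 0 <= lnorm q v.
Proof. by case: q => [q|] /=; [exact: powR_ge0 | exact: bigmax_ge_id]. Qed.

Lemma lnormF_pow q v : (0 < q)%N ->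
  lnorm (Defs.EFin q) v ^+ q = mean (fun l => `|v l| ^+ q).
Proof.
move=> q0; rewrite /= -powR_mulrn ?powR_ge0 // -powRrM mulVf ?pnatr_eq0 -?lt0n //.
by rewrite powRr1 // mean_ge0 // => l; rewrite exprn_ge0.
Qed.

Lemma lnormF_le q v N : (0 < q)%N -> 0 <= N ->
  (lnorm (Defs.EFin q) v <= N) = (mean (fun l => `|v l| ^+ q) <= N ^+ q).
Proof. by move=> q0 N0; rewrite -lnormF_pow // ler_pXn2r // nnegrE lnorm_ge0. Qed.

Lemma le_lnormI v l : `|v l| <= lnorm EInf v.
Proof. exact: le_bigmax. Qed.

Lemma lnormI_leP v N : 0 <= N -> reflect (forall l, `|v l| <= N) (lnorm EInf v <= N).
Proof.
move=> N0; apply: (iffP idP) => [vN l|vN]; first exact: le_trans (le_bigmax _ _ _) vN.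
exact: bigmax_le.
Qed.

Lemma le_lnorm q u v : (forall l, `|u l| <= `|v l|) -> lnorm q u <= lnorm q v.
Proof.
case: q => [q|] uv.
  apply: ge0_ler_powR; rewrite ?invr_ge0 ?ler0n // ?nnegrE.
  - by apply: mean_ge0 => l; rewrite exprn_ge0.
  - by apply: mean_ge0 => l; rewrite exprn_ge0.
  - by apply: ler_mean => l; rewrite lerXn2r ?nnegrE.
apply/(lnormI_leP _ (lnorm_ge0 _ _)) => l.
exact: le_trans (uv l) (le_lnormI _ _).
Qed.

Lemma lnorm_le1 q v : ext_pos q -> (forall l, `|v l| <= 1) -> lnorm q v <= 1.
Proof.
case: q => [q|] /= q0 v1; last exact/lnormI_leP.
rewrite lnormF_le // expr1n; apply: le_trans (mean_cst_le ler01).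
by apply: ler_mean => l; rewrite exprn_ile1.
Qed.

Lemma lnormZ_le q s v : ext_pos q -> 0 <= s ->
  lnorm q (fun l => s * v l) <= s * lnorm q v.
Proof.
case: q => [q|] q0 s0.
  rewrite lnormF_le ?mulr_ge0 ?lnorm_ge0 // exprMn lnormF_pow // -meanZ.
  by apply: ler_mean => l; rewrite normrM ger0_norm // exprMn.
apply/lnormI_leP; rewrite ?mulr_ge0 ?lnorm_ge0 // => l.
by rewrite normrM ger0_norm // ler_wpM2l // le_lnormI.
Qed.

Lemma lnorm_le_scale q s v : ext_pos q -> 0 < s ->
  (lnorm q (fun l => s^-1 * v l) <= 1) = (lnorm q v <= s).
Proof.
move=> q0 s0; apply/idP/idP => vs.
  have := lnormZ_le (fun l => s^-1 * v l) q0 (ltW s0).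
  have -> : (fun l => s * (s^-1 * v l)) = v.
    by apply/funext => l; rewrite mulrA mulfV ?gt_eqF // mul1r.
  by move/le_trans; apply; rewrite -[leRHS]mulr1 ler_pM2l.
apply: le_trans (lnormZ_le _ q0 _) _; first by rewrite invr_ge0 ltW.
by rewrite mulrC ler_pdivrMr // mul1r.
Qed.

Lemma lnorm_conv_le1 q t u v : ext_pos q -> 0 <= t <= 1 ->
  lnorm q u <= 1 -> lnorm q v <= 1 ->
  lnorm q (fun l => t * u l + (1 - t) * v l) <= 1.
Proof.
move=> q0 /andP[t0 t1]; have t'0 : 0 <= 1 - t by rewrite subr_ge0.
have tri l : `|t * u l + (1 - t) * v l| <= t * `|u l| + (1 - t) * `|v l|.
  by apply: le_trans (ler_normD _ _) _; rewrite !normrM (ger0_norm t0) (ger0_norm t'0).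
case: q q0 => [q|] q0.
  rewrite !lnormF_le // expr1n => u1 v1.
  apply: le_trans (_ : mean (fun l => t * `|u l| ^+ q + (1 - t) * `|v l| ^+ q) <= _).
    apply: ler_mean => l; apply: le_trans (convex_exprn _ _ _ _) => //.
    - by rewrite lerXn2r ?nnegrE ?addr_ge0 ?mulr_ge0.
    - by rewrite t0 t1.
  rewrite meanD !meanZ; apply: le_trans (lerD (ler_wpM2l t0 u1) (ler_wpM2l t'0 v1)) _.
  by rewrite !mulr1 addrC subrK.
move=> /(lnormI_leP _ ler01) u1 /(lnormI_leP _ ler01) v1.
apply/(lnormI_leP _ ler01) => l; apply: le_trans (tri l) _.
apply: le_trans (lerD (ler_wpM2l t0 (u1 l)) (ler_wpM2l t'0 (v1 l))) _.
by rewrite !mulr1 addrC subrK.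
Qed.

Lemma lnormD_le q u v : ext_pos q ->
  lnorm q (fun l => u l + v l) <= lnorm q u + lnorm q v.
Proof.
move=> q0; apply/ler_addgt0Pr => e e0; have e2 : 0 < e / 2 by rewrite divr_gt0.
(* Normalize by [lnorm + e / 2] rather than by [lnorm], which may vanish. *)
set U := lnorm q u + e / 2; set V := lnorm q v + e / 2.
have U0 : 0 < U by have := lnorm_ge0 q u; rewrite /U; lra.
have V0 : 0 < V by have := lnorm_ge0 q v; rewrite /V; lra.
have UV0 : 0 < U + V by rewrite addr_gt0.
have -> : lnorm q u + lnorm q v + e = U + V by rewrite /U /V; field.
rewrite -lnorm_le_scale //; set t := U / (U + V).
have -> : (fun l => (U + V)^-1 * (u l + v l)) =
          (fun l => t * (U^-1 * u l) + (1 - t) * (V^-1 * v l)).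
  by apply/funext => l; rewrite /t; field; rewrite !gt_eqF.
have t01 : 0 <= t <= 1.
  by rewrite divr_ge0 ?(ltW U0) ?(ltW UV0) //= ler_pdivrMr // mul1r lerDl ltW.
by apply: lnorm_conv_le1; rewrite ?lnorm_le_scale // lerDl ltW.
Qed.

Definition ext_ratio (k : nat) (q : ext) : R :=
  if q is Defs.EFin q then k%:R / q%:R else 0.

Lemma ext_ratio_ge0 k q : 0 <= ext_ratio k q.
Proof. by case: q => //= q; rewrite divr_ge0 ?ler0n. Qed.

Lemma lnorm_le1_dominated k q v : (0 < k)%N -> ext_le (Defs.EFin k) q ->
  lnorm q v <= 1 -> exists P : 'I_L -> R,
  [/\ forall l, 0 <= P l, mean P <= 1 & forall l, `|v l| ^+ k <= P l `^ ext_ratio k q].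
Proof.
case: q => [q|] k0 kq.
  have q0 : (0 < q)%N by apply: leq_trans kq.
  rewrite lnormF_le // expr1n => v1.
  exists (fun l => `|v l| ^+ q); split=> // l.
  rewrite /= -[`|v l| ^+ q]powR_mulrn // -powRrM mulrCA mulfV ?pnatr_eq0 -?lt0n //.
  by rewrite mulr1 powR_mulrn.
move=> /(lnormI_leP _ ler01) v1; exists (fun=> 0); split=> // [|l].
  exact: le_trans (mean_cst_le (lexx 0)) ler01.
by rewrite powRr0 exprn_ile1.
Qed.

Lemma AGCT_exponents_ratio k r m : AGCT_exponents (Defs.EFin k) r m ->
  [/\ (0 < k)%N, ext_le (Defs.EFin k) m, ext_le (Defs.EFin k) r &
      ext_ratio k m + ext_ratio k r <= 1].
Proof.
move=> [[/= k0 rp mp] H].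
case: m r mp rp H => [m|] [r|] /= mp rp; case=> [[km H]|[_ [//]]] //.
- have kr : (k <= r)%N by nia.
  split=> //; have -> : k%:R / m%:R + k%:R / r%:R = (k * r + k * m)%:R / (m * r)%:R :> R.
    by rewrite natrD !natrM; field; rewrite !pnatr_eq0 -!lt0n mp rp.
  by rewrite ler_pdivrMr ?ltr0n ?muln_gt0 ?mp // mul1r ler_nat; nia.
- by split=> //; rewrite addr0 ler_pdivrMr ?ltr0n // mul1r ler_nat.
- by split=> //; rewrite add0r ler_pdivrMr ?ltr0n // mul1r ler_nat.
Qed.

Lemma lnorm_mul_le1 k r m b c : AGCT_exponents k r m ->
  lnorm m b <= 1 -> lnorm r c <= 1 -> lnorm k (fun l => b l * c l) <= 1.
Proof.
case: k => [k|] expo; last first.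
  have [-> ->] : m = EInf /\ r = EInf.
    by case: expo => _ [[]|[_ [-> ->]]] //; case: m r => [?|] [?|].
  move=> /(lnormI_leP _ ler01) b1 /(lnormI_leP _ ler01) c1.
  by apply/(lnormI_leP _ ler01) => l; rewrite normrM mulr_ile1.
move=> b1 c1; have [k0 km kr ratio1] := AGCT_exponents_ratio expo.
have [Pb [Pb0 Pb1 bP]] := lnorm_le1_dominated k0 km b1.
have [Pc [Pc0 Pc1 cP]] := lnorm_le1_dominated k0 kr c1.
set a := ext_ratio k m in bP ratio1; set a' := ext_ratio k r in cP ratio1.
have a0 : 0 <= a := ext_ratio_ge0 _ _; have a'0 : 0 <= a' := ext_ratio_ge0 _ _.
rewrite lnormF_le // expr1n.
apply: le_trans (_ : mean (fun l => a * Pb l + a' * Pc l + (1 - a - a')) <= _).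
  apply: ler_mean => l; rewrite normrM exprMn.
  apply: le_trans (powR_mul_le_affine (Pb0 l) (Pc0 l) a0 a'0 ratio1).
  by rewrite ler_pM ?exprn_ge0.
rewrite meanD meanD !meanZ.
have slack : 0 <= 1 - a - a' by lra.
apply: le_trans (lerD (lerD (ler_wpM2l a0 Pb1) (ler_wpM2l a'0 Pc1)) (mean_cst_le slack)) _.
lra.
Qed.

Lemma lnorm_mul_le k r m b c : AGCT_exponents k r m ->
  lnorm m b <= 1 -> lnorm k (fun l => b l * c l) <= lnorm r c.
Proof.
move=> expo b1; have [[kp rp _] _] := expo.
apply/ler_addgt0Pr => e e0; have s0 : 0 < lnorm r c + e.
  by have := lnorm_ge0 r c; lra.
rewrite -lnorm_le_scale //.
have -> : (fun l => (lnorm r c + e)^-1 * (b l * c l)) =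
          (fun l => b l * ((lnorm r c + e)^-1 * c l)).
  by apply/funext => l; rewrite mulrCA.
by apply: (lnorm_mul_le1 expo b1); rewrite lnorm_le_scale // lerDl ltW.
Qed.

End NormalizedNorms.

Lemma block_cons (T : Type) (Y : int -> T) (i : int) (s : nat) :
  block Y i s.+1 = Y i :: block Y (i - 1) s.
Proof.
rewrite /block /mkseq /= subr0 -[in iota 1 s](addn0 1%N) iotaDl -map_comp.
by congr (_ :: _); apply: eq_map => t /=; rewrite -addn1 PoszD opprD addrA.
Qed.

Section Estimators.
Variables (R : realType) (A : finType) (L : nat) (X : 'I_L -> int -> A)
  (p : 'I_L -> (nat -> A) -> A -> R) (n : nat).
Hypotheses (n0 : (0 < n)%N) (A0 : (0 < #|A|)%N).

Lemma Ncount_shift (Y : int -> A) w :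
  Ncount Y n.-1 w = (\sum_((size w).+1 <= i < n.+1) (block Y (i%:Z - 1) (size w) == w))%N.
Proof.
rewrite /Ncount big_add1 /= prednK //; apply: eq_bigr => i _.
by rewrite -addn1 PoszD addrK.
Qed.

Lemma sum_Ncount_cons (Y : int -> A) w :
  (\sum_(a : A) Ncount Y n (a :: w))%N = Ncount Y n.-1 w.
Proof.
rewrite Ncount_shift /Ncount /= exchange_big /=; apply: eq_bigr => i _.
rewrite block_cons (bigD1 (Y i)) //= eqseq_cons eqxx big1 ?addn0 // => a aY.
by rewrite eqseq_cons eq_sym (negbTE aY).
Qed.

Lemma uniform_dist : is_dist (fun _ : A => #|A|%:R^-1 : R).
Proof.
split=> [a|]; first by rewrite invr_ge0 ler0n.
by rewrite sumr_const -[_ *+ _]mulr_natr mulVf // pnatr_eq0 -lt0n.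
Qed.

Lemma phat_dist l w : is_dist (phat R X n l w).
Proof.
rewrite /phat; case: (enough X n w) / forallP => [/(_ l) N0|_]; last exact: uniform_dist.
split=> [a|]; first by rewrite divr_ge0 ?ler0n.
by rewrite -mulr_suml -natr_sum sum_Ncount_cons mulfV // pnatr_eq0 -lt0n.
Qed.

Lemma pbar_dist : (forall l x, is_dist (p l x)) -> forall l w, is_dist (pbar X p n l w).
Proof.
move=> pd l w; rewrite /pbar.
case: (enough X n w) / forallP => [/(_ l) N0|_]; last exact: uniform_dist.
split=> [a|].
  rewrite mulr_ge0 ?invr_ge0 ?ler0n // sumr_ge0 // => i _.
  by rewrite mulr_ge0 ?ler0n //; case: (pd l (past (X l) i%:Z)).
rewrite -mulr_sumr exchange_big /=.
under eq_bigr => i _ do rewrite -mulr_sumr (proj2 (pd _ _)) mulr1.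
by rewrite -natr_sum -Ncount_shift mulVf // pnatr_eq0 -lt0n.
Qed.

End Estimators.

Section Metric01.
Variables (R : realType) (A : finType) (dl : (A -> R) -> (A -> R) -> R).
Hypothesis dm : is_metric01 dl.
Implicit Types q : A -> R.

Lemma metric01_bounds q q' : is_dist q -> is_dist q' -> 0 <= dl q q' <= 1.
Proof. by move=> dq dq'; case: (dm dq dq' dq'). Qed.

Lemma metric01_refl q : is_dist q -> dl q q = 0.
Proof. by move=> dq; case: (dm dq dq dq) => _ [_ ->]. Qed.

Lemma metric01_sym q q' : is_dist q -> is_dist q' -> dl q q' = dl q' q.
Proof. by move=> dq dq'; case: (dm dq dq' dq'). Qed.

Lemma metric01_triangle q q' q'' : is_dist q -> is_dist q' -> is_dist q'' ->
  dl q q'' <= dl q q' + dl q' q''.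
Proof. by move=> dq dq' dq''; case: (dm dq dq' dq''). Qed.

End Metric01.

Lemma lnorm_metric_triangle (R : realType) (A : finType) (L : nat) (k : ext)
    (dl : 'I_L -> (A -> R) -> (A -> R) -> R) (q1 q2 q3 : 'I_L -> A -> R) :
  ext_pos k -> (forall l, is_metric01 (dl l)) ->
  (forall l, is_dist (q1 l)) -> (forall l, is_dist (q2 l)) -> (forall l, is_dist (q3 l)) ->
  lnorm k (fun l => dl l (q1 l) (q3 l)) <=
    lnorm k (fun l => dl l (q1 l) (q2 l)) + lnorm k (fun l => dl l (q2 l) (q3 l)).
Proof.
move=> k0 dm d1 d2 d3; apply: le_trans (lnormD_le _ _ k0); apply: le_lnorm => l.
have /andP[d12 _] := metric01_bounds (dm l) (d1 l) (d2 l).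
have /andP[d23 _] := metric01_bounds (dm l) (d2 l) (d3 l).
have /andP[d13 _] := metric01_bounds (dm l) (d1 l) (d3 l).
by rewrite !ger0_norm ?addr_ge0 // metric01_triangle.
Qed.

Section ErrorBounds.
Variables (R : realType) (A : finType) (L : nat) (X : 'I_L -> int -> A)
  (p : 'I_L -> (nat -> A) -> A -> R) (n : nat)
  (d : 'I_L -> (A -> R) -> (A -> R) -> R) (conf : 'I_L -> seq A -> R).
Hypotheses (n0 : (0 < n)%N) (A0 : (0 < #|A|)%N).
Hypotheses (pd : forall l x, is_dist (p l x)) (dm : forall l, is_metric01 (d l)).

Lemma lnorm_p_pbar_le_cw k w (z : 'I_L -> nat -> A) : ext_pos k ->
  (forall l, mkseq (z l) (size w) = w) ->
  lnorm k (fun l => d l (p l (z l)) (pbar X p n l w)) <= cw X p n d k w.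
Proof.
move=> k0 zw; apply: ub_le_sup; last by exists z.
exists 1 => _ [z' _ <-]; apply: lnorm_le1 => // l.
have /andP[d0 d1] := metric01_bounds (dm l) (pd l (z' l)) (pbar_dist X n0 A0 pd l w).
by rewrite ger0_norm.
Qed.

Lemma lnorm_pbar_phat_le_conf k r m w :
  AGCT conf k r m -> Good X p n d conf m ->
  lnorm k (fun l => d l (pbar X p n l w) (phat R X n l w)) <= lnorm r (fun l => conf l w).
Proof.
move=> [_ _ expo] good; have [[_ _ m0] _] := expo.
set V := (fun l => d l _ _).
suff [b bm ->] : exists2 b, lnorm m b <= 1 & V = (fun l => b l * conf l w).
  exact: lnorm_mul_le _ expo bm.
case en : (enough X n w).
  have [conf0 bm] := good w en; exists (fun l => V l / conf l w) => //.
  apply/funext => l; have [c0|cn0] := eqVneq (conf l w) 0; last by rewrite divfK.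
  by rewrite c0 mulr0; exact: conf0.
exists (fun=> 0); first by apply: lnorm_le1 => // l; rewrite normr0 ler01.
apply/funext => l; rewrite mul0r /V /pbar /phat en /=.
by rewrite (metric01_refl (dm l) (uniform_dist R A0)).
Qed.

End ErrorBounds.

Theorem corollary3p1 (R : realType) (A : finType) (L n : nat)
  (X : 'I_L -> int -> A) (p : 'I_L -> (nat -> A) -> A -> R)
  (d : 'I_L -> (A -> R) -> (A -> R) -> R) (conf : 'I_L -> seq A -> R)
  (k r m : ext) (T : seq (seq A)) :
  (0 < L)%N -> (0 < n)%N ->
  (forall l x, is_dist (p l x)) ->
  (forall l, is_metric01 (d l)) ->
  AGCT conf k r m ->
  is_oracle_tree X p n d conf k r T ->
  Good X p n d conf m ->
  forall x : nat -> A,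
    lnorm k (fun l => d l (phat R X n l (Tx T x)) (p l x))
      <= cw X p n d k (Tx T x) + lnorm r (fun l => conf l (Tx T x)).
Proof.
move=> _ n0 pd dm agct _ good x.
have A0 : (0 < #|A|)%N by apply/card_gt0P; exists (x 0%N).
have [_ _ [[k0 _ _] _]] := agct.
set w := Tx T x.
have phatd := phat_dist R X n0 A0.
have pbard := pbar_dist X n0 A0 pd.
apply: le_trans (lnorm_metric_triangle k0 dm (phatd^~ w) (pbard^~ w) (pd^~ x)) _.
rewrite addrC; apply: lerD.
  have -> : (fun l => d l (pbar X p n l w) (p l x)) = (fun l => d l (p l x) (pbar X p n l w)).
    by apply/funext => l; exact: (metric01_sym (dm l) (pbard l w) (pd l x)).
  by apply: lnorm_p_pbar_le_cw => // l; rewrite /w /Tx size_mkseq.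
have -> : (fun l => d l (phat R X n l w) (pbar X p n l w)) =
          (fun l => d l (pbar X p n l w) (phat R X n l w)).
  by apply/funext => l; exact: (metric01_sym (dm l) (phatd l w) (pbard l w)).
exact: lnorm_pbar_phat_le_conf agct good.
Qed.
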